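(* Let $\varepsilon=\varepsilon(n)$ satisfy $\varepsilon\le1$ and $n\varepsilon\to\infty$. In the variable-processor cup game on $n$ cups with $\varepsilon$ resource augmentation, suppose the emptier uses proportional emptying and the filler always places at least $1/n^2$ units of water into every cup in every round. Then there is a constant $C$ such that at any time $t$ the backlog is at most $C\varepsilon^{-1}\log n$ with probability at least $1-1/\mathrm{poly}(n)$ (high probability in $n$), against any adaptive filler.
   Context: Variable-processor cup game with $\varepsilon$ resource augmentation: nonnegative real fills, initially $0$; each round the filler chooses an integer $1\le p\le n$ and reals $q_1,\dots,q_n\in[0,1]$ with $\sum q_j=p$ and adds $q_j$ to cup $j$; then the emptier chooses $p$ distinct cups and replaces each of their fills $x$ by $\max(0,x-(1+\varepsilon))$. Backlog = maximum fill. The filler is adaptive (sees the outcomes of the emptier's previous random choices). Proportional emptying: in each round the emptier selects a random set of $p$ distinct cups such that each cup $j$ is included with probability exactly $q_j$ (such a distribution exists). *)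

From HB Require Import structures.
From mathcomp Require Import all_boot all_order all_algebra.
From mathcomp Require Import all_classical all_reals all_analysis.
Set Implicit Arguments. Unset Strict Implicit. Unset Printing Implicit Defensive.
Import Order.TTheory GRing.Theory Num.Theory.
Local Open Scope ring_scope.

(* Variable-processor cup game on n cups (cups = 'I_n).
   A history is the list of sets emptied so far, NEWEST FIRST. *)
Section Game.
Variables (R : realType) (n : nat).

Definition hist := seq {set 'I_n}.

(* A (deterministic, adaptive) filler strategy: from the history of the
   emptier's (random) choices it chooses the number of processors p and
   the amounts q_j added to the cups. *)
Definition filler := hist -> nat * ('I_n -> R).

Definition valid_move (p : nat) (q : 'I_n -> R) : Prop :=
  [/\ (1 <= p <= n)%N, forall j, 0 <= q j <= 1 & \sum_j q j = p%:R].

Definition valid_filler (F : filler) : Prop :=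
  forall h, valid_move (F h).1 (F h).2.

Definition lower_bounded (F : filler) : Prop :=
  forall h j, (n%:R ^+ 2)^-1 <= (F h).2 j.

(* An emptier: for each history, a probability distribution on subsets of
   cups to empty in the current round. *)
Definition emptier := hist -> {set 'I_n} -> R.

Definition proportional (F : filler) (D : emptier) : Prop :=
  forall h,
  [/\ forall A, 0 <= D h A,
      \sum_(A : {set 'I_n}) D h A = 1,
      forall A, D h A != 0 -> #|A| = (F h).1
    & forall j : 'I_n, \sum_(A : {set 'I_n} | j \in A) D h A = (F h).2 j].

Fixpoint fills (eps : R) (F : filler) (h : hist) : 'I_n -> R := fun j =>
  match h with
  | [::] => 0
  | A :: h' =>
      let y := fills eps F h' j + (F h').2 j in
      if j \in A then Num.max 0 (y - (1 + eps)) else y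
  end.

Fixpoint hprob (D : emptier) (h : hist) : R :=
  match h with
  | [::] => 1
  | A :: h' => D h' A * hprob D h'
  end.

Definition backlog_exceeds_prob (eps : R) (F : filler) (D : emptier)
    (t : nat) (B : R) : R :=
  \sum_(h : t.-tuple {set 'I_n})
     (if [exists j, B < fills eps F h j] then hprob D h else 0).

End Game.

From HB Require Import structures.
From mathcomp Require Import all_boot all_order all_algebra.
From mathcomp Require Import all_classical all_reals all_analysis.
From mathcomp Require Import ring lra.
Set Implicit Arguments. Unset Strict Implicit. Unset Printing Implicit Defensive.
Import Order.TTheory GRing.Theory Num.Theory.
Import numFieldNormedType.Exports.
Local Open Scope classical_set_scope.
Local Open Scope ring_scope.

(* Track for each cup j the exponential potential E[exp(eps/4 * fill_j)].
   In one round cup j receives q >= 1/n^2 and is emptied with probability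
   exactly q; the resource augmentation makes the expected drift so negative
   that the potential contracts by the factor exp(-q eps^2/12) up to an
   additive 1 (the clipping at 0).  Hence it stays below 1 + 12 n^2/eps^2 at
   every time, and Markov's inequality plus a union bound over the n cups
   bound the probability that some fill exceeds B by
   n (1 + 12 n^2/eps^2) exp(-eps B/4); for B = 4(c+9) ln n / eps and
   eps >= 1/n this is at most n^-c. *)

Section ExponentialBounds.
Variable R : realType.

Lemma expRN_mul1D_le1 (y : R) : expR (- y) * (1 + y) <= 1.
Proof.
have inv : expR (- y) * expR y = 1 by rewrite -expRD addNr expR0.
by rewrite -[leRHS]inv ler_wpM2l ?expR_ge0 ?expR_ge1Dx.
Qed.

Lemma emptying_gain_ge (e : R) : 0 < e <= 1 ->
  e ^+ 2 / 12 <= 1 - expR (- (e / 4 * (1 + e))) - e / 4.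
Proof.
move=> /andP [e_gt0 e_le1].
set y := e / 4 * (1 + e).
have := expRN_mul1D_le1 y; have := expR_gt0 (- y).
set z := expR (- y) => z_gt0 zy_le1.
have yE : y = (e + e ^+ 2) / 4 by rewrite /y; field.
have y_le : y <= 1 / 2 by rewrite yE; nra.
have : (1 + y) * (e / 4 + e ^+ 2 / 12) <= y by rewrite yE; nra.
nra.
Qed.

Lemma mean_expR_round_le (e q : R) : 0 < e <= 1 -> 0 <= q <= 1 ->
  q * expR (e / 4 * (q - (1 + e))) + (1 - q) * expR (e / 4 * q)
   <= expR (- (q * (e ^+ 2 / 12))).
Proof.
move=> e01 /andP [q_ge0 q_le1].
have := emptying_gain_ge e01.
set a := 1 - expR (- (e / 4 * (1 + e))) => gain.
have -> : q * expR (e / 4 * (q - (1 + e))) + (1 - q) * expR (e / 4 * q)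
    = expR (e / 4 * q) * (1 - q * a).
  rewrite /a (_ : e / 4 * (q - (1 + e)) = e / 4 * q + - (e / 4 * (1 + e))).
    by rewrite expRD; ring.
  by ring.
have lin : 1 - q * a <= expR (- (q * a)) by have := expR_ge1Dx (- (q * a)); lra.
apply: le_trans (ler_wpM2l (expR_ge0 _) lin) _.
rewrite -expRD ler_expR.
have : 0 <= q * (a - e / 4 - e ^+ 2 / 12) by apply: mulr_ge0 => //; lra.
lra.
Qed.

(* [expR (k * max 0 y) <= 1 + expR (k * y)] absorbs the clipping at 0 into
   the additive [1]. *)
Lemma two_point_round_le (e q x : R) : 0 < e <= 1 -> 0 <= q <= 1 ->
  q * expR (e / 4 * Num.max 0 (x + q - (1 + e))) + (1 - q) * expR (e / 4 * (x + q))
   <= expR (- (q * (e ^+ 2 / 12))) * expR (e / 4 * x) + 1.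
Proof.
move=> e01 q01; have /andP [q_ge0 q_le1] := q01.
have clip : expR (e / 4 * Num.max 0 (x + q - (1 + e)))
    <= 1 + expR (e / 4 * x) * expR (e / 4 * (q - (1 + e))).
  rewrite -expRD (_ : e / 4 * x + e / 4 * (q - (1 + e)) = e / 4 * (x + q - (1 + e))).
    case: (leP 0 (x + q - (1 + e))) => _; first by rewrite lerDr.
    by rewrite mulr0 expR0 lerDl expR_ge0.
  by ring.
have mean := mean_expR_round_le e01 q01.
have := ler_wpM2l (expR_ge0 (e / 4 * x)) mean.
have := ler_wpM2l q_ge0 clip.
rewrite [e / 4 * (x + q)]mulrDr expRD.
have := expR_gt0 (e / 4 * x).
nra.
Qed.

Lemma affine_recursion_le (a : nat -> R) (d : R) : 0 < d -> a 0%N <= 1 + d^-1 ->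
  (forall t, a t.+1 <= expR (- d) * a t + 1) -> forall t, a t <= 1 + d^-1.
Proof.
move=> d_gt0 a0 aS; elim=> [//|t IH].
apply: le_trans (aS t) _; apply: le_trans (lerD (ler_wpM2l (expR_ge0 _) IH) (lexx 1)) _.
have := expRN_mul1D_le1 d; have := expR_gt0 (- d).
set r := expR (- d) => r_gt0 fixed.
have -> : r * (1 + d^-1) + 1 = r * (1 + d) / d + 1 by field; lra.
by rewrite addrC lerD2l ler_pdivrMr // mulVf ?gt_eqF.
Qed.

Lemma size_factor_le (m e : R) : 2 <= m -> 1 <= m * e ->
  m * (1 + ((m ^+ 2)^-1 * (e ^+ 2 / 12))^-1) <= m ^+ 9.
Proof.
move=> m_ge2 me_ge1.
have e_gt0 : 0 < e by rewrite -(pmulr_rgt0 _ (_ : 0 < m)); lra.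
have einv_le : e^-1 <= m by rewrite -(ler_pM2r e_gt0) mulVf ?gt_eqF.
have -> : ((m ^+ 2)^-1 * (e ^+ 2 / 12))^-1 = 12 * m ^+ 2 * (e^-1) ^+ 2.
  by field; apply/andP; split; apply/eqP; lra.
have einv2_le : (e^-1) ^+ 2 <= m ^+ 2 by rewrite lerXn2r ?nnegrE ?invr_ge0; lra.
have m2_ge4 : 4 <= m ^+ 2 by rewrite expr2; nra.
have -> : m ^+ 9 = m * ((m ^+ 2 * m ^+ 2) * (m ^+ 2 * m ^+ 2)).
  by ring.
apply: ler_wpM2l; first lra.
set k := m ^+ 2 in einv2_le m2_ge4 *.
have : k * (e^-1) ^+ 2 <= k * k by apply: ler_wpM2l; lra.
have : 16 <= k * k by nra.
nra.
Qed.

End ExponentialBounds.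

Section TupleSums.
Variables (T : finType) (V : nmodType).

Lemma sum_tuple0 (f : seq T -> V) : \sum_(h : 0.-tuple T) f h = f [::].
Proof. by rewrite (big_pred1 [tuple]) // => h; rewrite [h]tuple0 /= eqxx. Qed.

Lemma sum_tupleS t (f : seq T -> V) :
  \sum_(h : t.+1.-tuple T) f h = \sum_(h : t.-tuple T) \sum_(x : T) f (x :: h).
Proof.
rewrite exchange_big pair_big /=.
rewrite (reindex (fun p : T * t.-tuple T => [tuple of p.1 :: p.2])) //=.
exists (fun h : t.+1.-tuple T => (thead h, [tuple of behead h])).
  by move=> [x h] _; congr pair; apply: val_inj.
by move=> h _; rewrite [in RHS](tuple_eta h); apply: val_inj.
Qed.

End TupleSums.

Lemma sum_subsets_mem (T : finType) (R : pzRingType) (P : {set T} -> R) (j : T)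
    (q : R) (f : bool -> R) :
  \sum_A P A = 1 -> \sum_(A : {set T} | j \in A) P A = q ->
  \sum_A P A * f (j \in A) = q * f true + (1 - q) * f false.
Proof.
move=> P1 Pj; rewrite (bigID (fun A : {set T} => j \in A)) /=.
rewrite (eq_bigr (fun A : {set T} => P A * f true)) => [|A ->//].
rewrite [X in _ + X](eq_bigr (fun A : {set T} => P A * f false)) => [|A /negbTE ->//].
rewrite -!big_distrl /= Pj; congr (_ + _ * _).
by move: P1; rewrite (bigID (fun A : {set T} => j \in A)) /= Pj => <-; rewrite addrC addrK.
Qed.

Section Potential.
Variables (R : realType) (n : nat) (e : R) (F : filler R n) (D : emptier R n).
Hypotheses (e01 : 0 < e <= 1) (n_gt0 : (0 < n)%N).
Hypotheses (F_valid : valid_filler F) (F_lb : lower_bounded F).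
Hypothesis D_prop : proportional F D.

Lemma hprob_ge0 (h : hist n) : 0 <= hprob D h.
Proof.
elim: h => [|A h IH] /=; first exact: ler01.
by have [D_ge0 _ _ _] := D_prop h; apply: mulr_ge0.
Qed.

Lemma sum_hprob t : \sum_(h : t.-tuple {set 'I_n}) hprob D h = 1.
Proof.
elim: t => [|t IH]; first by rewrite sum_tuple0.
rewrite sum_tupleS -[RHS]IH; apply: eq_bigr => h _ /=.
by rewrite -big_distrl /=; have [_ -> _ _] := D_prop h; rewrite mul1r.
Qed.

Definition potential t (j : 'I_n) : R :=
  \sum_(h : t.-tuple {set 'I_n}) hprob D h * expR (e / 4 * fills e F h j).

Let delta : R := (n%:R ^+ 2)^-1 * (e ^+ 2 / 12).

Lemma delta_gt0 : 0 < delta.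
Proof.
have e_gt0 : 0 < e by case/andP: e01.
by rewrite /delta mulr_gt0 ?divr_gt0 ?invr_gt0 ?exprn_gt0 ?ltr0n.
Qed.

Lemma potentialS_le t j : potential t.+1 j <= expR (- delta) * potential t j + 1.
Proof.
rewrite /potential (sum_tupleS t (fun h => hprob D h * expR (e / 4 * fills e F h j))).
rewrite -[X in _ <= _ + X](sum_hprob t) big_distrr -big_split.
apply: ler_sum => h _.
have [_ /(_ j) /andP [q_ge0 q_le1] _] := F_valid h.
have [_ D1 _ Dj] := D_prop h.
have -> : \sum_A hprob D (A :: h) * expR (e / 4 * fills e F (A :: h) j)
    = hprob D h * \sum_A D h A * expR (e / 4 *
        (if j \in A then Num.max 0 (fills e F h j + (F h).2 j - (1 + e))
         else fills e F h j + (F h).2 j)).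
  by rewrite big_distrr; apply: eq_bigr => A _ /=; ring.
rewrite (sum_subsets_mem (fun b => expR (e / 4 * (if b
    then Num.max 0 (fills e F h j + (F h).2 j - (1 + e))
    else fills e F h j + (F h).2 j))) D1 (Dj j)) /=.
rewrite [leRHS](_ : _ = hprob D h * (expR (- delta) * expR (e / 4 * fills e F h j) + 1));
  last by ring.
rewrite ler_wpM2l ?hprob_ge0 //.
apply: le_trans (two_point_round_le _ e01 _) _; first by rewrite q_ge0.
rewrite lerD2r ler_wpM2r ?expR_ge0 // ler_expR lerN2 ler_wpM2r ?F_lb //.
by rewrite divr_ge0 ?exprn_ge0 //; case/andP: e01 => /ltW.
Qed.

Lemma potential_le t j : potential t j <= 1 + delta^-1.
Proof.
apply: (@affine_recursion_le _ (potential^~ j) _ delta_gt0) => [|s].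
  rewrite /potential (sum_tuple0 (fun h => hprob D h * expR (e / 4 * fills e F h j))) /=.
  by rewrite mulr0 expR0 mulr1 lerDl invr_ge0 ltW ?delta_gt0.
exact: potentialS_le.
Qed.

(* Markov's inequality for [expR (e / 4 * fill)] and a union bound over cups. *)
Lemma backlog_exceeds_prob_le t B :
  backlog_exceeds_prob e F D t B <= n%:R * (1 + delta^-1) * expR (- (e / 4 * B)).
Proof.
have e_gt0 : 0 < e by case/andP: e01.
apply: (@le_trans _ _ (\sum_(j : 'I_n) potential t j * expR (- (e / 4 * B)))); last first.
  apply: le_trans (ler_sum _ (fun j _ => ler_wpM2r (expR_ge0 _) (potential_le t j))) _.
  by rewrite sumr_const card_ord -[leRHS]mulrA mulr_natl.
rewrite /potential; under eq_bigr do rewrite big_distrl.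
rewrite exchange_big /=; apply: ler_sum => h _.
have term_ge0 j : 0 <= hprob D h * expR (e / 4 * fills e F h j) * expR (- (e / 4 * B)).
  by rewrite !mulr_ge0 ?expR_ge0 ?hprob_ge0.
case: existsP => [[j0 B_lt]|_]; last exact: sumr_ge0.
rewrite (bigD1 j0) //= -[leLHS]addr0 lerD ?sumr_ge0 //.
rewrite -mulrA -expRD -[leLHS]mulr1 ler_wpM2l ?hprob_ge0 //.
rewrite -[leLHS]expR0 ler_expR subr_ge0 ler_wpM2l ?divr_gt0 ?ltW //; lra.
Qed.

End Potential.

Theorem lemma7p4 (R : realType) (eps : nat -> R) :
  (forall n, eps n <= 1) ->
  (fun n => n%:R * eps n) @ \oo --> +oo ->
  forall c : nat, exists C : R, exists N : nat,
  forall n : nat, (N <= n)%N ->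
  forall (F : filler R n) (D : emptier R n),
    valid_filler F -> lower_bounded F -> proportional F D ->
    forall t : nat,
      backlog_exceeds_prob (eps n) F D t (C * (eps n)^-1 * ln n%:R)
        <= (n%:R ^+ c)^-1.
Proof.
move=> eps_le1 neps_cvg c.
have [N _ neps_ge1] := (cvgryPge _).1 neps_cvg 1.
exists (4 * (c + 9)%:R), (maxn N 2) => n; rewrite geq_max => /andP [nN n2].
move=> F D F_valid F_lb D_prop t.
have /= me_ge1 := neps_ge1 n nN.
have m_ge2 : 2 <= n%:R :> R by rewrite (ler_nat R 2 n).
have e_gt0 : 0 < eps n by rewrite -(pmulr_rgt0 _ (_ : 0 < n%:R)); lra.
have e01 : 0 < eps n <= 1 by rewrite e_gt0 eps_le1.
apply: le_trans (backlog_exceeds_prob_le e01 _ F_valid F_lb D_prop t _) _.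
  by apply: leq_trans n2.
have -> : eps n / 4 * (4 * (c + 9)%:R * (eps n)^-1 * ln n%:R) = (c + 9)%:R * ln n%:R.
  by field; apply/eqP; lra.
rewrite expRN expRM_natl lnK ?posrE; last lra.
rewrite ler_pdivrMr ?exprn_gt0 ?exprD ?mulKf ?expf_neq0 ?size_factor_le //; lra.
Qed.
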